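(* For every integer $t\ge 2$ and every positive integer $d$, \[ g\Big(1+\frac{d}{t},t\Big)\le \frac{(2d+1)t+d^2}{(t+d)(2d+1)} = 1-\frac{d^2+d}{(t+d)(2d+1)}. \]
   Context: Let $\mathbb{F}$ be a finite field and $x_1,\dots,x_p$ a basis of $\mathbb{F}^p$. A $[t\times m,p]$ array code is a $t\times m$ array whose entries (cells) are linear combinations of $x_1,\dots,x_p$; its columns are called servers. It has the $k$-PIR property (is a $[t\times m,p]$ $k$-PIR array code) if for every $i\in\{1,\dots,p\}$ there exist $k$ pairwise disjoint sets $S_1,\dots,S_k$ of columns such that for every $j$ the vector $x_i$ lies in the linear span of all entries of the columns in $S_j$. Its PIR rate is $k/m$. For a rational $s>1$ and a positive integer $t$ with $st$ an integer, $g(s,t)$ is the largest PIR rate $k/m$ of a $[t\times m,st]$ $k$-PIR array code (over all finite fields, all $m$ and all $k$). *)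

From HB Require Import structures.
From mathcomp Require Import all_boot all_order all_algebra.
Set Implicit Arguments. Unset Strict Implicit. Unset Printing Implicit Defensive.
Import Order.TTheory GRing.Theory Num.Theory.
Local Open Scope ring_scope.

(* A [t x m, p] array code over F: cell (a, j) (row a, column/server j) is a
   vector of F^p, i.e. its coordinates w.r.t. the basis x_1..x_p of F^p. *)
Definition array_code (F : fieldType) (t m p : nat) := 'I_t -> 'I_m -> 'rV[F]_p.

Definition in_span_cols (F : fieldType) (t m p : nat) (C : array_code F t m p)
    (S : {set 'I_m}) (v : 'rV[F]_p) : Prop :=
  exists c : 'I_t -> 'I_m -> F, v = \sum_(a < t) \sum_(j in S) c a j *: C a j.

Definition basis_vec (F : fieldType) (p : nat) (i : 'I_p) : 'rV[F]_p :=
  delta_mx 0 i.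

Definition is_kPIR (F : fieldType) (t m p k : nat) (C : array_code F t m p) : Prop :=
  forall i : 'I_p, exists S : 'I_k -> {set 'I_m},
    (forall j1 j2 : 'I_k, j1 != j2 -> [disjoint S j1 & S j2]) /\
    (forall j : 'I_k, in_span_cols C (S j) (basis_vec F i)).

(* r is the PIR rate k/m of some [t x m, s t] k-PIR array code over some
   finite field. g(s,t) is the largest such r. *)
Definition pir_rate_achievable (s : rat) (t : nat) (r : rat) : Prop :=
  exists (F : finFieldType) (m k p : nat) (C : array_code F t m p),
    p%:Q = s * t%:Q /\ @is_kPIR F t m p k C /\ r = k%:Q / m%:Q.

(** Let p = t + d and, for a server j, let B_j be the set of basis vectors lying in the span W_j
    of its t cells; thus |B_j| <= dim W_j <= t.  Call j full if |B_j| = t: then W_j is spanned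
    by B_j, so every vector of W_j has zero x_i-coordinate for x_i outside B_j.  For a fixed
    x_i, each of its k disjoint recovery sets either has at least two servers or is a single
    server storing x_i, and it must contain a server that is not full or stores x_i.  Hence
    2k <= m + #{j | x_i in W_j} and k <= #{non-full} + #{full j | x_i in W_j}.  Summing over i
    and counting the pairs (i, j) with x_i in W_j through the servers gives
    2pk <= pm + t #full + (t - 1) #nonfull  and  pk <= p #nonfull + t #full,
    and d times the first plus the second is  (2d + 1) p k <= ((2d + 1) t + d^2) m. *)

From mathcomp Require Import all_boot all_order all_algebra.
From mathcomp Require Import zify.
Import Order.TTheory GRing.Theory Num.Theory.

Set Implicit Arguments.
Unset Strict Implicit.

Lemma sum_card_rel (I J : finType) (R : I -> J -> bool) (X : {set J}) :
  \sum_i #|[set j in X | R i j]| = \sum_(j in X) #|[set i | R i j]|.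
Proof.
under eq_bigr do rewrite -sum1dep_card.
under [RHS]eq_bigr do rewrite -sum1dep_card.
rewrite (exchange_big_dep (fun j => j \in X)) /=; last by move=> i j _ /andP[].
by apply: eq_bigr => j jX; apply: eq_bigl => i; rewrite jX.
Qed.

Lemma sum_card_disjoint_setI_le (I J : finType) (S : I -> {set J}) (X : {set J}) :
  (forall i1 i2, i1 != i2 -> [disjoint S i1 & S i2]) ->
  \sum_i #|S i :&: X| <= #|X|.
Proof.
move=> disjS; have SXE i : S i :&: X = [set j in X | j \in S i].
  by apply/setP=> j; rewrite !inE andbC.
under eq_bigr do rewrite SXE.
rewrite sum_card_rel -sum1_card; apply: leq_sum => j _; apply/card_le1_eqP => i1 i2.
rewrite !inE => j1 j2; apply/eqP; apply: contraT => /disjS/disjointFr/(_ j2).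
by rewrite j1.
Qed.

Section BasisVectors.

Variables (F : fieldType) (p : nat).

Lemma basis_vec_neq0 (i : 'I_p) : basis_vec F i != 0%R.
Proof.
apply/eqP => /matrixP/(_ ord0 i)/eqP; rewrite !mxE !eqxx /=.
by rewrite oner_eq0.
Qed.

Lemma basis_vec_notin_coord_ker (i : 'I_p) :
  ~~ (basis_vec F i <= kermx (delta_mx i (@ord0 0)))%MS.
Proof.
rewrite sub_kermx /basis_vec mul_delta_mx.
by apply/negP => /eqP/matrixP/(_ ord0 ord0)/eqP; rewrite !mxE !eqxx oner_eq0.
Qed.

Definition basis_mx (B : {set 'I_p}) : 'M[F]_(#|B|, p) :=
  \matrix_(l < #|B|) basis_vec F (enum_val l).

Lemma basis_mx_free (B : {set 'I_p}) : row_free (basis_mx B).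
Proof.
apply/row_freeP; exists (\matrix_(c, l) (c == enum_val l)%:R)%R.
apply/matrixP => l l'; rewrite !mxE (bigD1 (enum_val l)) //= big1 ?addr0.
  by rewrite !mxE !eqxx mul1r (inj_eq enum_val_inj) eq_sym.
by move=> c cl; rewrite !mxE eqxx /= (negbTE cl) mul0r.
Qed.

Variables (n : nat) (W : 'M[F]_(n, p)) (B : {set 'I_p}).
Hypothesis sBW : forall i, i \in B -> (basis_vec F i <= W)%MS.

Lemma basis_mx_sub : (basis_mx B <= W)%MS.
Proof. by apply/row_subP => l; rewrite rowK; apply/sBW/enum_valP. Qed.

Lemma card_basis_sub_le_rank : (#|B| <= \rank W)%N.
Proof.
by rewrite -{1}(eqP (basis_mx_free B)); apply/mxrankS/basis_mx_sub.
Qed.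

Lemma rank_le_card_basis_coord0 i :
  (\rank W <= #|B|)%N -> i \notin B -> (W <= kermx (delta_mx i (@ord0 0)))%MS.
Proof.
move=> rankW iB; have sWB : (W <= basis_mx B)%MS.
  have [_ <-] := mxrank_leqif_sup basis_mx_sub.
  by rewrite (eqP (basis_mx_free B)) eqn_leq card_basis_sub_le_rank rankW.
apply: submx_trans sWB _; apply/row_subP => l.
rewrite rowK sub_kermx; apply/eqP/mul_delta_mx_0.
by apply: contraNneq iB => <-; apply: enum_valP.
Qed.

End BasisVectors.

Section ServerSpaces.

Variables (F : fieldType) (t m p : nat) (C : array_code F t m p).

Definition server_space (j : 'I_m) : 'M[F]_(t, p) := \matrix_a C a j.

Definition stored_coords j : {set 'I_p} :=
  [set i | (basis_vec F i <= server_space j)%MS].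

Definition storing_servers i : {set 'I_m} :=
  [set j | (basis_vec F i <= server_space j)%MS].

Definition full_servers : {set 'I_m} := [set j | #|stored_coords j| == t].

Definition useful_servers i : {set 'I_m} :=
  ~: full_servers :|: (full_servers :&: storing_servers i).

Lemma cell_sub_server_space a j : (C a j <= server_space j)%MS.
Proof. by rewrite -(rowK (fun a => C a j) a); apply: row_sub. Qed.

Lemma in_span_cols_sub S v n (V : 'M[F]_(n, p)) :
  in_span_cols C S v -> (forall j, j \in S -> (server_space j <= V)%MS) ->
  (v <= V)%MS.
Proof.
move=> [c ->] sSV; apply: summx_sub => a _; apply: summx_sub => j jS.
exact/scalemx_sub/(submx_trans (cell_sub_server_space a j))/sSV.
Qed.

Lemma card_stored_coords_le j : #|stored_coords j| <= t.
Proof.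
apply: leq_trans (rank_leq_row (server_space j)).
by apply: card_basis_sub_le_rank => i; rewrite inE.
Qed.

Lemma full_server_coord0 i j : j \in full_servers -> j \notin storing_servers i ->
  (server_space j <= kermx (delta_mx i (@ord0 0)))%MS.
Proof.
rewrite !inE => /eqP fullj ij; apply: (rank_le_card_basis_coord0 (B := stored_coords j)).
- by move=> i'; rewrite inE.
- by rewrite fullj rank_leq_row.
- by rewrite inE.
Qed.

Lemma recovery_set_card i S : in_span_cols C S (basis_vec F i) ->
  2 <= #|S| + #|S :&: storing_servers i|.
Proof.
move=> recS; have [S0 | [j0 j0S]] := set_0Vmem S.
  have : (basis_vec F i <= (0 : 'M[F]_p)%R)%MS.
    by apply: in_span_cols_sub recS _ => j; rewrite S0 inE.
  by rewrite submx0 (negbTE (basis_vec_neq0 F i)).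
have [S_le1 | S_gt1] := leqP #|S| 1; last exact: leq_trans S_gt1 (leq_addr _ _).
have j0_stores : j0 \in S :&: storing_servers i.
  rewrite !inE j0S; apply: in_span_cols_sub recS _ => j jS.
  by rewrite (card_le1_eqP S_le1 j j0).
by rewrite -add1n leq_add // card_gt0; apply/set0Pn; [exists j0 | exists j0].
Qed.

Lemma recovery_set_meets_useful i S : in_span_cols C S (basis_vec F i) ->
  0 < #|S :&: useful_servers i|.
Proof.
move=> recS; rewrite card_gt0 setI_eq0.
apply: contra (basis_vec_notin_coord_ker F i) => disjSU.
apply: in_span_cols_sub recS _ => j jS.
have := disjointFr disjSU jS; rewrite in_setU in_setC in_setI.
by case fullj: (j \in full_servers) => //= /negbT; apply: full_server_coord0.
Qed.

Lemma kPIR_coord_bounds k i : is_kPIR k C ->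
  2 * k <= m + #|storing_servers i| /\ k <= #|useful_servers i|.
Proof.
move=> /(_ i) [S [disjS recS]]; split.
  apply: leq_trans (_ : _ <= \sum_l #|S l :&: setT| + \sum_l #|S l :&: storing_servers i|) _.
    rewrite -big_split mulnC -[X in X * 2]card_ord -sum_nat_const.
    by apply: leq_sum => l _; rewrite setIT; apply: recovery_set_card.
  rewrite leq_add ?sum_card_disjoint_setI_le //.
  by rewrite -[X in _ <= X]card_ord -cardsT sum_card_disjoint_setI_le.
apply: leq_trans (sum_card_disjoint_setI_le _ disjS).
rewrite -[X in X <= _]card_ord -sum1_card.
by apply: leq_sum => l _; apply: recovery_set_meets_useful.
Qed.

Lemma sum_card_storing_servers :
  \sum_i #|storing_servers i| = \sum_j #|stored_coords j|.
Proof.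
transitivity (\sum_(j in setT) #|stored_coords j|); last by apply: eq_bigl => j; rewrite inE.
rewrite -(sum_card_rel (fun i j => (basis_vec F i <= server_space j)%MS)).
by apply: eq_bigr => i _; apply: eq_card => j; rewrite !inE.
Qed.

Lemma sum_card_stored_coords_le :
  \sum_j #|stored_coords j| <= #|full_servers| * t + #|~: full_servers| * (t - 1).
Proof.
rewrite (bigID (mem full_servers)) /= leq_add //.
  by rewrite -sum_nat_const leq_sum // => j _; apply: card_stored_coords_le.
rewrite (eq_bigl (fun j => j \in ~: full_servers)); last by move=> j; rewrite !inE.
rewrite -sum_nat_const leq_sum // => j; rewrite !inE => nfullj.
by rewrite subn1 -ltnS (leq_trans _ (leqSpred t)) // ltn_neqAle nfullj card_stored_coords_le.
Qed.

Lemma sum_card_useful_servers_le :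
  \sum_i #|useful_servers i| <= p * #|~: full_servers| + #|full_servers| * t.
Proof.
apply: leq_trans (_ : \sum_i (#|~: full_servers| + #|full_servers :&: storing_servers i|) <= _).
  by apply: leq_sum => i _; apply: (leq_card_setU _ _).1.
rewrite big_split sum_nat_const card_ord leq_add //.
have fullE i : full_servers :&: storing_servers i =
    [set j in full_servers | (basis_vec F i <= server_space j)%MS].
  by apply/setP => j; rewrite !inE.
under eq_bigr do rewrite fullE.
rewrite sum_card_rel -sum_nat_const leq_sum // => j _.
by rewrite -[X in X <= _]/#|stored_coords j| card_stored_coords_le.
Qed.

End ServerSpaces.

Lemma weighted_count_bound t d m k nF nN sB :
  0 < t -> nF + nN = m ->
  2 * ((t + d) * k) <= (t + d) * m + sB ->
  sB <= nF * t + nN * (t - 1) ->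
  (t + d) * k <= (t + d) * nN + nF * t ->
  k * ((t + d) * (2 * d + 1)) <= ((2 * d + 1) * t + d ^ 2) * m.
Proof.
move=> t_gt0 <- h1 hB h2.
have := leq_add (leq_mul (leqnn d) (leq_trans h1 (leq_add (leqnn _) hB))) h2.
nia.
Qed.

Lemma kPIR_card_bound (F : fieldType) t d m k (C : array_code F t m (t + d)) :
  0 < t -> is_kPIR k C ->
  k * ((t + d) * (2 * d + 1)) <= ((2 * d + 1) * t + d ^ 2) * m.
Proof.
move=> t_gt0 kC; pose p := t + d.
have coord_sum1 : 2 * (p * k) <= p * m + \sum_i #|storing_servers C i|.
  rewrite mulnCA -[X in X * (2 * k)]card_ord -sum_nat_const.
  rewrite -[X in X * m]card_ord -sum_nat_const -big_split leq_sum // => i _.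
  by case: (kPIR_coord_bounds i kC).
have coord_sum2 : p * k <= \sum_i #|useful_servers C i|.
  rewrite -[X in X * k]card_ord -sum_nat_const leq_sum // => i _.
  by case: (kPIR_coord_bounds i kC).
apply: weighted_count_bound t_gt0 (etrans (cardsC (full_servers C)) (card_ord m)) coord_sum1 _ _.
  by rewrite sum_card_storing_servers sum_card_stored_coords_le.
by apply: leq_trans coord_sum2 _; rewrite sum_card_useful_servers_le.
Qed.

Local Open Scope ring_scope.

Theorem theorem4 (t d : nat) (ht : (2 <= t)%N) (hd : (0 < d)%N) (r : rat) :
  pir_rate_achievable (1 + d%:Q / t%:Q) t r ->
  r <= (((2 * d + 1) * t + d ^ 2)%N)%:Q / (((t + d) * (2 * d + 1))%N)%:Q.
Proof.
move=> [F [m [k [p [C [p_eq [kC ->]]]]]]].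
have t_gt0 : (0 < t)%N by apply: ltnW.
have t_neq0 : t%:Q != 0 by rewrite -pmulrn pnatr_eq0 -lt0n.
move: p_eq; rewrite mulrDl mul1r divfK // -!pmulrn -natrD => /eqP.
rewrite eqr_nat => /eqP p_def; subst p.
have [-> | m_gt0] := posnP m; first by rewrite invr0 mulr0 divr_ge0 ?ler0n.
rewrite ler_pdivrMr ?ltr0n // mulrAC ler_pdivlMr; last by rewrite ltr0n; lia.
by rewrite -!natrM ler_nat (kPIR_card_bound t_gt0 kC).
Qed.
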